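(* Let $(A,\leq,\cdot,/)$ be a right-residuated magma satisfying condition (N), and let $B\subseteq A$ be closed under $\sqcap$. The following are equivalent: (1) $(B,\sqcap)$ is a semilattice; (2) $\sqcap$ is commutative on $B$; (3) for all $x,y\in B$, $(x\sqcap y)\sqcap x = x\sqcap y$ and $x\sqcap y\leq y$.
   Context: Write $xy$ for $x\cdot y$; $\cdot$ binds more strongly than $/$, and $/$ binds more strongly than $\sqcap$, where $x\sqcap y := (x/y)y$. A right-residuated magma is a structure $(A,\leq,\cdot,/)$ where $(A,\leq)$ is a poset and $xy\leq z\iff x\leq z/y$ for all $x,y,z\in A$. Condition (N): for all $x,y\in A$, $x\leq y\iff x = y\sqcap x$. *)

Record RRMagma := {
  carrier :> Type;
  le : carrier -> carrier -> Prop;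
  mul : carrier -> carrier -> carrier;
  rdiv : carrier -> carrier -> carrier;
  le_refl : forall x, le x x;
  le_antisym : forall x y, le x y -> le y x -> x = y;
  le_trans : forall x y z, le x y -> le y z -> le x z;
  residuation : forall x y z, le (mul x y) z <-> le x (rdiv z y)
}.

Definition rmeet (A : RRMagma) (x y : A) : A := mul A (rdiv A x y) y.

Definition condN (A : RRMagma) : Prop :=
  forall x y : A, le A x y <-> x = rmeet A y x.

Definition meet_closed (A : RRMagma) (B : A -> Prop) : Prop :=
  forall x y, B x -> B y -> B (rmeet A x y).

Definition is_semilattice_on (A : RRMagma) (B : A -> Prop) : Prop :=
  (forall x y z, B x -> B y -> B z ->
      rmeet A (rmeet A x y) z = rmeet A x (rmeet A y z)) /\
  (forall x y, B x -> B y -> rmeet A x y = rmeet A y x) /\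
  (forall x, B x -> rmeet A x x = x).

(* In a right-residuated magma, [x ⊓ y = (x / y) y] lies below [x] and is
   monotone in [x]; condition (N) makes it idempotent and says that
   [x <= y] forces [y ⊓ x = x].  Once [⊓] is commutative on [B], these facts
   make [x ⊓ y] the greatest lower bound of [x] and [y] among the elements of
   [B], and associativity follows by antisymmetry.  Conversely, the two
   identities of (3) give [x ⊓ y = (x ⊓ y) ⊓ x <= y ⊓ x] by monotonicity,
   and symmetrically, hence commutativity. *)

Section RightResiduatedMagma.

Context {A : RRMagma}.

Local Infix "<=" := (le A).
Local Infix "⊓" := (rmeet A) (at level 40, left associativity).

Lemma mul_monol (x y z : A) : x <= y -> mul A x z <= mul A y z.
Proof.
  intro hxy. apply residuation.
  apply le_trans with y; [exact hxy |].
  apply residuation, le_refl.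
Qed.

Lemma rmeet_le_l (x y : A) : x ⊓ y <= x.
Proof. apply residuation, le_refl. Qed.

Lemma rdiv_monol (x y z : A) : x <= y -> rdiv A x z <= rdiv A y z.
Proof.
  intro hxy. apply residuation.
  apply le_trans with x; [apply rmeet_le_l | exact hxy].
Qed.

Lemma rmeet_monol (x y z : A) : x <= y -> x ⊓ z <= y ⊓ z.
Proof. intro hxy. apply mul_monol, rdiv_monol, hxy. Qed.

Lemma rmeet_le_swap (x y : A) :
  x ⊓ y ⊓ x = x ⊓ y -> x ⊓ y <= y -> x ⊓ y <= y ⊓ x.
Proof.
  intros habs hle. apply le_trans with (x ⊓ y ⊓ x).
  - rewrite habs. apply le_refl.
  - apply rmeet_monol, hle.
Qed.

Hypothesis hN : condN A.

Lemma rmeet_idem (x : A) : x ⊓ x = x.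
Proof. symmetry. apply hN, le_refl. Qed.

Lemma rmeet_absorb_le {x y : A} : x <= y -> y ⊓ x = x.
Proof. intro hxy. symmetry. apply hN, hxy. Qed.

Variable B : A -> Prop.
Hypothesis hB : meet_closed A B.

Definition rmeet_comm_on : Prop := forall x y, B x -> B y -> x ⊓ y = y ⊓ x.

Section Commutative.

Hypothesis hC : rmeet_comm_on.

Lemma rmeet_le_r (x y : A) : B x -> B y -> x ⊓ y <= y.
Proof. intros bx by_. rewrite hC by assumption. apply rmeet_le_l. Qed.

Lemma rmeet_glb (x y z : A) : B x -> B y -> B z ->
  z <= x -> z <= y -> z <= x ⊓ y.
Proof.
  intros bx by_ bz hzx hzy.
  rewrite <- (rmeet_absorb_le hzy), hC by assumption.
  apply rmeet_monol, hzx.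
Qed.

Lemma rmeet_assoc_on (x y z : A) : B x -> B y -> B z ->
  x ⊓ y ⊓ z = x ⊓ (y ⊓ z).
Proof.
  intros bx by_ bz.
  assert (bxy := hB _ _ bx by_). assert (byz := hB _ _ by_ bz).
  apply le_antisym; apply rmeet_glb; auto.
  - apply le_trans with (x ⊓ y); apply rmeet_le_l.
  - apply rmeet_glb; auto.
    + apply le_trans with (x ⊓ y); [apply rmeet_le_l | apply rmeet_le_r; auto].
    + apply rmeet_le_r; auto.
  - apply rmeet_glb; auto.
    + apply rmeet_le_l.
    + apply le_trans with (y ⊓ z); [apply rmeet_le_r | apply rmeet_le_l]; auto.
  - apply le_trans with (y ⊓ z); apply rmeet_le_r; auto.
Qed.

Lemma rmeet_comm_semilattice : is_semilattice_on A B.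
Proof.
  split; [| split].
  - intros x y z bx by_ bz. apply rmeet_assoc_on; assumption.
  - exact hC.
  - intros x _. apply rmeet_idem.
Qed.

Lemma rmeet_comm_absorb (x y : A) : B x -> B y -> x ⊓ y ⊓ x = x ⊓ y.
Proof.
  intros bx by_. rewrite hC by auto.
  apply rmeet_absorb_le, rmeet_le_l.
Qed.

End Commutative.

End RightResiduatedMagma.

Theorem mainTheorem4 (A : RRMagma) (B : A -> Prop)
  (hN : condN A) (hB : meet_closed A B) :
  (is_semilattice_on A B <->
     (forall x y, B x -> B y -> rmeet A x y = rmeet A y x)) /\
  ((forall x y, B x -> B y -> rmeet A x y = rmeet A y x) <->
     (forall x y, B x -> B y ->
        rmeet A (rmeet A x y) x = rmeet A x y /\ le A (rmeet A x y) y)).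
Proof.
  split; split.
  - intros [_ [hC _]]. exact hC.
  - intro hC. exact (rmeet_comm_semilattice hN B hB hC).
  - intros hC x y bx by_.
    split; [apply (rmeet_comm_absorb hN B hB hC) | apply (rmeet_le_r B hC)]; assumption.
  - intros h3 x y bx by_.
    apply le_antisym; apply rmeet_le_swap; apply h3; assumption.
Qed.
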